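(* Let $X_d=X^{\otimes d}$ and suppose $\sum_{k=1}^\infty\bar\lambda^X_k\mathbf 1(\bar\lambda^X_k<e^{-x})=\varphi(x)$, $x\ge0$, for some slowly varying function $\varphi$. Then $$\lim_{d\to\infty}d\,\varphi\bigl(\ln n^{X_d}(\varepsilon)\bigr)=-\ln(1-\varepsilon^2)\quad\text{for all }\varepsilon\in(0,1).$$
   Context: Let $X$ be a centered random element of a separable Hilbert space $H$ with $\mathbb E\|X\|^2<\infty$, covariance eigenvalues $\lambda^X_1\ge\lambda^X_2\ge\dots\ge0$ (with multiplicity, padded with zeros), $\lambda^X_1>0$, trace $\Lambda^X$, and $\bar\lambda^X_k=\lambda^X_k/\Lambda^X$. $X_d=X^{\otimes d}$ is the centered random element of $H^{\otimes d}$ with covariance operator $(K^X)^{\otimes d}$; its eigenvalues are $\prod_{j=1}^d\lambda^X_{k_j}$. With $\bar\lambda^{X_d}_k$ the normalized nonincreasing eigenvalues of $X_d$, $n^{X_d}(\varepsilon)=\min\{n\in\mathbb N:\sum_{k>n}\bar\lambda^{X_d}_k\le\varepsilon^2\}$. A slowly varying function is a positive measurable $\varphi$ on some $[T,\infty)$ with $\varphi(cx)/\varphi(x)\to1$ as $x\to\infty$ for every $c>0$. *)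

From Stdlib Require Import Reals Lra List ClassicalEpsilon.
Open Scope R_scope.

(* Normalized eigenvalues  lbar_k = lambda_k / Lambda  (0-based: lbar 0 = \bar\lambda_1). *)
Definition lbar (lam : nat -> R) (Lam : R) (k : nat) : R := lam k / Lam.

Definition multi_index (d : nat) : Type := { l : list nat | length l = d }.

(* Eigenvalue of X_d = X^{(x) d} at a multi-index:  prod_j lbar_{k_j}. *)
Definition prod_eig (lam : nat -> R) (Lam : R) (d : nat) (i : multi_index d) : R :=
  fold_right Rmult 1 (map (lbar lam Lam) (proj1_sig i)).

(* mu is the nonincreasing enumeration, with multiplicity and padded with zeros,
   of the nonnegative family f. *)
Definition is_rearrangement {I : Type} (mu : nat -> R) (f : I -> R) : Prop :=
  (forall k, 0 <= mu k) /\ (forall k, mu (S k) <= mu k) /\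
  exists (g : { k : nat | 0 < mu k } -> { i : I | 0 < f i })
         (h : { i : I | 0 < f i } -> { k : nat | 0 < mu k }),
    (forall x, h (g x) = x) /\ (forall y, g (h y) = y) /\
    (forall x, mu (proj1_sig x) = f (proj1_sig (g x))).

(* The normalized nonincreasing eigenvalues of X_d (chosen; unique when they exist). *)
Definition lbarXd (lam : nat -> R) (Lam : R) (d : nat) : nat -> R :=
  epsilon (inhabits (fun _ : nat => 0))
          (fun mu => is_rearrangement mu (prod_eig lam Lam d)).

(* sum_{k >= n} mu_k <= t  (0-based; = sum_{k>n} in 1-based indexing), for
   nonnegative mu: all partial sums of the tail are <= t. *)
Definition tail_le (mu : nat -> R) (n : nat) (t : R) : Prop :=
  forall m, sum_f_R0 (fun k => mu (n + k)%nat) m <= t.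

Definition is_nX (mu : nat -> R) (eps : R) (n : nat) : Prop :=
  tail_le mu n (eps ^ 2) /\ forall m, (m < n)%nat -> ~ tail_le mu m (eps ^ 2).

Definition nX (mu : nat -> R) (eps : R) : nat :=
  epsilon (inhabits 0%nat) (is_nX mu eps).

Definition slowly_varying (phi : R -> R) : Prop :=
  exists T : R, (forall x, T <= x -> 0 < phi x) /\
    forall c, 0 < c -> forall e, 0 < e -> exists M, forall x, M <= x ->
      Rabs (phi (c * x) / phi x - 1) < e.

(* The eigenvalues of [X_d] are the products of [d] normalized eigenvalues of [X]. Such a product
   is below [exp (- x)] essentially when one of its factors is, so the eigenvalues of [X_d] below
   [exp (- x)] carry mass about [1 - (1 - phi x)^d ~ 1 - exp (- d phi x)]; the error is controlled
   by [d (phi z - phi x)] and by an entropy term of order [d (M + z phi z) / x] for [z] well below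
   [x]. Since [n^{X_d}(eps)] is, up to these errors, the number of eigenvalues above the level
   where the remaining mass is [eps^2], it is about [exp x] where [d phi x ~ - ln (1 - eps^2)].
   Slow variation of [phi] makes all these comparisons insensitive to the constant factors lost
   along a dyadic grid of levels. *)

From Stdlib Require Import Reals List ClassicalEpsilon.
From Stdlib Require Import Lra Lia Classical ProofIrrelevance FunctionalExtensionality.
Open Scope R_scope.

(** * Finite sums and products *)

Definition lsum {A} (h : A -> R) (L : list A) : R :=
  fold_right (fun a s => h a + s) 0 L.

Lemma lsum_app {A} (h : A -> R) L1 L2 : lsum h (L1 ++ L2) = lsum h L1 + lsum h L2.
Proof. induction L1; simpl; [lra | rewrite IHL1; lra]. Qed.

Lemma lsum_map {A B} (h : B -> R) (f : A -> B) L : lsum h (map f L) = lsum (fun a => h (f a)) L.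
Proof. induction L; simpl; [|rewrite IHL]; reflexivity. Qed.

Lemma lsum_flat_map {A B} (h : B -> R) (f : A -> list B) L :
  lsum h (flat_map f L) = lsum (fun a => lsum h (f a)) L.
Proof. induction L; simpl; [|rewrite lsum_app, IHL]; reflexivity. Qed.

Lemma lsum_ext {A} (h g : A -> R) L : (forall a, In a L -> h a = g a) -> lsum h L = lsum g L.
Proof. induction L; simpl; intros H; [|rewrite H, IHL]; auto. Qed.

Lemma lsum_le {A} (h g : A -> R) L : (forall a, In a L -> h a <= g a) -> lsum h L <= lsum g L.
Proof.
  induction L; simpl; intros H; [lra|].
  assert (lsum h L <= lsum g L) by (apply IHL; auto). specialize (H a (or_introl eq_refl)). lra.
Qed.

Lemma lsum_nonneg {A} (h : A -> R) L : (forall a, In a L -> 0 <= h a) -> 0 <= lsum h L.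
Proof.
  induction L; simpl; intros H; [lra|].
  assert (0 <= lsum h L) by (apply IHL; auto). specialize (H a (or_introl eq_refl)). lra.
Qed.

Lemma lsum_plus {A} (h g : A -> R) L : lsum (fun a => h a + g a) L = lsum h L + lsum g L.
Proof. induction L; simpl; [lra | rewrite IHL; lra]. Qed.

Lemma lsum_minus {A} (h g : A -> R) L : lsum (fun a => h a - g a) L = lsum h L - lsum g L.
Proof. induction L; simpl; [lra | rewrite IHL; lra]. Qed.

Lemma lsum_scal {A} (c : R) (h : A -> R) L : lsum (fun a => c * h a) L = c * lsum h L.
Proof. induction L; simpl; [lra | rewrite IHL; lra]. Qed.

Lemma lsum_scal_r {A} (c : R) (h : A -> R) L : lsum (fun a => h a * c) L = lsum h L * c.
Proof. induction L; simpl; [lra | rewrite IHL; lra]. Qed.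

Lemma lsum_const {A} (c : R) (L : list A) : lsum (fun _ => c) L = INR (length L) * c.
Proof. induction L; [simpl; lra|]. cbn [length lsum fold_right]. rewrite S_INR. fold (lsum (fun _ => c) L). rewrite IHL. ring. Qed.

Lemma lsum_swap {A B} (h : A -> B -> R) (L1 : list A) (L2 : list B) :
  lsum (fun a => lsum (h a) L2) L1 = lsum (fun b => lsum (fun a => h a b) L1) L2.
Proof.
  induction L1; simpl. { induction L2; simpl; lra. }
  rewrite IHL1, <- lsum_plus. reflexivity.
Qed.

Lemma lsum_ge_term {A} (h : A -> R) L a :
  (forall b, In b L -> 0 <= h b) -> In a L -> h a <= lsum h L.
Proof.
  induction L as [|b L IH]; simpl; intros H Ha; [contradiction|].
  destruct Ha as [<- | Ha].
  - assert (0 <= lsum h L) by (apply lsum_nonneg; auto). lra.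
  - assert (h a <= lsum h L) by (apply IH; auto). specialize (H b (or_introl eq_refl)). lra.
Qed.

Lemma lsum_incl {A} (h : A -> R) L B :
  (forall a, 0 <= h a) -> NoDup L -> incl L B -> lsum h L <= lsum h B.
Proof.
  intros Hh. revert B. induction L as [|a L IH]; intros B HN HI.
  - apply lsum_nonneg; auto.
  - inversion HN as [|? ? Ha HL]; subst.
    destruct (in_split a B (HI a (or_introl eq_refl))) as [B1 [B2 ->]].
    assert (lsum h L <= lsum h (B1 ++ B2)).
    { apply IH; auto. intros x Hx. specialize (HI x (or_intror Hx)).
      apply in_app_or in HI. apply in_or_app. destruct HI as [|[->|]]; tauto. }
    rewrite lsum_app in *. simpl. lra.
Qed.

Lemma lsum_filter {A} (h : A -> R) (P : A -> bool) L :
  (forall a, In a L -> P a = false -> h a = 0) -> lsum h L = lsum h (filter P L).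
Proof.
  induction L; simpl; intros H; auto.
  destruct (P a) eqn:E; simpl; rewrite IHL; auto. rewrite H; auto. lra.
Qed.

Lemma sum_f_R0_lsum (a : nat -> R) n m :
  sum_f_R0 (fun k => a (n + k)%nat) m = lsum a (seq n (S m)).
Proof.
  induction m. { simpl. rewrite Nat.add_0_r. lra. }
  cbn [sum_f_R0]. rewrite IHm, (seq_S (S m) n), lsum_app. simpl. lra.
Qed.

Fixpoint lprod (q : nat -> R) (l : list nat) : R :=
  match l with nil => 1 | k :: l => q k * lprod q l end.

Lemma fold_right_Rmult_map q l : fold_right Rmult 1 (map q l) = lprod q l.
Proof. induction l; simpl; [|rewrite IHl]; reflexivity. Qed.

Lemma lprod_nonneg q l : (forall k, 0 <= q k) -> 0 <= lprod q l.
Proof. intros H; induction l; simpl; [lra | apply Rmult_le_pos; auto]. Qed.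

Lemma lprod_pos q l : (forall k, 0 < q k) -> 0 < lprod q l.
Proof. intros H; induction l; simpl; [lra | apply Rmult_lt_0_compat; auto]. Qed.

Lemma lprod_ext q p l : (forall k, In k l -> q k = p k) -> lprod q l = lprod p l.
Proof. induction l; simpl; intros H; [|rewrite IHl, H]; auto. Qed.

Lemma lprod_le q p l : (forall k, 0 <= q k <= p k) -> lprod q l <= lprod p l.
Proof.
  intros H; induction l; simpl; [lra|].
  assert (0 <= lprod q l) by (apply lprod_nonneg; apply H).
  apply Rmult_le_compat; auto; apply H.
Qed.

Lemma lprod_zero q l k : In k l -> q k = 0 -> lprod q l = 0.
Proof.
  induction l; simpl; intros Hk Hq; [contradiction|].
  destruct Hk as [<- | Hk]; [rewrite Hq | rewrite IHl]; auto; ring.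
Qed.

Lemma lprod_le_factor p l k : (forall k, 0 < p k <= 1) -> In k l -> lprod p l <= p k.
Proof.
  intros Hp Hk. induction l as [|a l IH]; simpl in *; [contradiction|].
  assert (0 < lprod p l) by (apply lprod_pos; apply Hp).
  assert (lprod p l <= 1).
  { clear IH Hk. induction l; simpl; [lra|].
    assert (0 < lprod p l) by (apply lprod_pos; apply Hp). specialize (Hp a0). nra. }
  specialize (Hp a). destruct Hk as [<- | Hk]; [nra|]. specialize (IH Hk). nra.
Qed.

Lemma ln_lprod p l : (forall k, 0 < p k) -> ln (lprod p l) = lsum (fun k => ln (p k)) l.
Proof.
  intros Hp; induction l; simpl; [apply ln_1|].
  rewrite ln_mult, IHl; auto. apply lprod_pos; auto.
Qed.

(** * Boxes of multi-indices *)

Lemma pow_le1 x n : 0 <= x <= 1 -> x ^ n <= 1.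
Proof. intros H. rewrite <- (pow1 n). apply pow_incr; lra. Qed.

Lemma pow_ge_one_sub a d : 0 <= a <= 1 -> 1 - INR d * a <= (1 - a) ^ d.
Proof.
  intros Ha. induction d; [simpl; lra|].
  rewrite S_INR. simpl. assert (0 <= (1 - a) ^ d) by (apply pow_le; lra).
  pose proof (pos_INR d). nra.
Qed.

Fixpoint box (d K : nat) : list (list nat) :=
  match d with
  | O => nil :: nil
  | S d => flat_map (fun k => map (cons k) (box d K)) (seq 0 (S K))
  end.

Lemma box_In d K l : In l (box d K) <-> length l = d /\ Forall (fun k => (k <= K)%nat) l.
Proof.
  revert l; induction d; intros l; cbn [box].
  - split; [intros [<- | []]; auto | intros [H _]; destruct l; [now left | discriminate]].
  - rewrite in_flat_map. split.
    + intros [k [Hk Hl]]. apply in_map_iff in Hl. destruct Hl as [l' [<- Hl']].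
      apply IHd in Hl' as [Hlen HF]. apply in_seq in Hk. split; simpl; auto.
      constructor; auto; lia.
    + intros [HL HF]. destruct l as [|k l']; [discriminate|]. inversion HF; subst.
      exists k. split; [apply in_seq; lia|]. apply in_map, IHd. auto.
Qed.

Lemma box_NoDup d K : NoDup (box d K).
Proof.
  induction d; cbn [box]; [repeat constructor; simpl; tauto|].
  generalize (seq_NoDup (S K) 0). generalize (seq 0 (S K)). intros s Hs.
  induction s as [|k s IHs]; simpl; [constructor|]. inversion Hs; subst.
  apply NoDup_app; auto.
  - apply NoDup_map_NoDup_ForallPairs; auto. intros x y _ _ E; now inversion E.
  - intros l Hl Hl2. apply in_map_iff in Hl as [l' [<- _]].
    apply in_flat_map in Hl2 as [k' [Hk' Hm]]. apply in_map_iff in Hm as [l'' [E _]].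
    inversion E; subst. contradiction.
Qed.

Lemma lsum_box_S d K (f : list nat -> R) :
  lsum f (box (S d) K) = lsum (fun k => lsum (fun l => f (k :: l)) (box d K)) (seq 0 (S K)).
Proof. cbn [box]. rewrite lsum_flat_map. apply lsum_ext. intros. apply lsum_map. Qed.

Lemma lsum_lprod_box q d K : lsum (lprod q) (box d K) = lsum q (seq 0 (S K)) ^ d.
Proof.
  induction d; [simpl; lra|].
  rewrite lsum_box_S, <- tech_pow_Rmult, <- IHd, <- lsum_scal_r.
  apply lsum_ext. intros k _. rewrite <- lsum_scal. apply lsum_ext; reflexivity.
Qed.

Lemma lsum_box_additive_le q g d K : (forall k, 0 <= q k) -> (forall k, 0 <= g k) ->
  lsum q (seq 0 (S K)) <= 1 ->
  lsum (fun l => lprod q l * lsum g l) (box d K)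
  <= INR d * lsum (fun k => q k * g k) (seq 0 (S K)).
Proof.
  intros Hq Hg HS.
  set (S0 := lsum q (seq 0 (S K))) in *. set (T := lsum (fun k => q k * g k) (seq 0 (S K))).
  assert (HS0 : 0 <= S0) by (apply lsum_nonneg; auto).
  assert (HT : 0 <= T) by (apply lsum_nonneg; intros; apply Rmult_le_pos; auto).
  induction d as [|d IH]; [simpl; lra|].
  set (L := lsum (fun l => lprod q l * lsum g l) (box d K)) in *.
  assert (E : lsum (fun l => lprod q l * lsum g l) (box (S d) K) = T * S0 ^ d + S0 * L).
  { rewrite lsum_box_S. unfold T, S0, L. rewrite <- lsum_lprod_box.
    rewrite <- !lsum_scal_r, <- !lsum_plus. apply lsum_ext. intros k _.
    rewrite <- !lsum_scal, <- lsum_plus. apply lsum_ext. intros l _. simpl. ring. }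
  assert (0 <= L) by (apply lsum_nonneg; intros; apply Rmult_le_pos;
                      [apply lprod_nonneg | apply lsum_nonneg]; auto).
  assert (S0 ^ d <= 1) by (apply pow_le1; lra).
  rewrite E, S_INR. nra.
Qed.

(** * Mass of small products *)

Lemma exp_le x y : x <= y -> exp x <= exp y.
Proof. intros [H | ->]; [left; now apply exp_increasing | lra]. Qed.

Lemma ln_le x y : 0 < x -> x <= y -> ln x <= ln y.
Proof. intros H [H1 | ->]; [left; now apply ln_increasing | lra]. Qed.

Lemma ln_nonpos x : 0 < x <= 1 -> ln x <= 0.
Proof. intros H. rewrite <- ln_1. apply ln_le; lra. Qed.

Lemma partial_sum_diff_le a b la lb : (forall n, b n <= a n) ->
  infinite_sum a la -> infinite_sum b lb ->
  forall K, lsum a (seq 0 (S K)) - lsum b (seq 0 (S K)) <= la - lb.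
Proof.
  intros Hab Ha Hb K. rewrite <- !(sum_f_R0_lsum _ 0).
  apply (growing_ineq (fun i => sum_f_R0 a i - sum_f_R0 b i)); [|exact (CV_minus _ _ _ _ Ha Hb)].
  intros n. simpl. specialize (Hab (S n)). lra.
Qed.

Lemma infinite_sum_zero : infinite_sum (fun _ => 0) 0.
Proof.
  intros e He. exists O. intros n _. rewrite (sum_eq_R0 _ n) by auto.
  unfold Rdist. rewrite Rminus_0_r, Rabs_R0. lra.
Qed.

Lemma partial_sum_le a la : (forall n, 0 <= a n) -> infinite_sum a la ->
  forall K, lsum a (seq 0 (S K)) <= la.
Proof.
  intros H Ha K. pose proof (partial_sum_diff_le a _ la 0 H Ha infinite_sum_zero K).
  rewrite (lsum_const 0) in *. lra.
Qed.

Lemma infinite_sum_le a b la lb : (forall n, b n <= a n) ->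
  infinite_sum a la -> infinite_sum b lb -> lb <= la.
Proof.
  intros Hab Ha Hb. pose proof (partial_sum_diff_le a b la lb Hab Ha Hb 0). simpl in *.
  specialize (Hab 0%nat). lra.
Qed.

Definition indic_lt (b c : R) : R := if Rlt_dec b c then 1 else 0.

(* For [p = lbar lam Lam] the sum of [low p x] is the function [phi x] of the theorem. *)
Definition low (p : nat -> R) (x : R) (k : nat) : R :=
  if Rlt_dec (p k) (exp (- x)) then p k else 0.

Definition nlog_cut (z t : R) : R := if Rlt_dec t (exp (- z)) then 0 else - ln t.

Lemma indic_lt_01 b c : 0 <= indic_lt b c <= 1.
Proof. unfold indic_lt; destruct Rlt_dec; lra. Qed.

Lemma indic_lt_mono b c c' : c <= c' -> 0 <= indic_lt b c' - indic_lt b c.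
Proof. intros H. unfold indic_lt; do 2 destruct Rlt_dec; lra. Qed.

Lemma nlog_cut_nonneg z t : 0 < t <= 1 -> 0 <= nlog_cut z t.
Proof. intros Ht. unfold nlog_cut. destruct Rlt_dec; [lra|]. pose proof (ln_nonpos t Ht). lra. Qed.

Lemma low_le p x k : 0 <= p k -> 0 <= low p x k <= p k.
Proof. unfold low; destruct Rlt_dec; lra. Qed.

Lemma low_anti p x y k : 0 <= p k -> x <= y -> low p y k <= low p x k.
Proof.
  intros Hp Hxy. assert (exp (- y) <= exp (- x)) by (apply exp_le; lra).
  unfold low; do 2 destruct Rlt_dec; lra.
Qed.

Lemma pow_sub_pow_le a b c d : 0 <= b -> b <= a -> a <= 1 -> a - b <= c -> c <= 1 ->
  a ^ d - b ^ d <= 1 - (1 - c) ^ d.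
Proof.
  intros Hb Hba Ha Hc Hc1.
  assert (a ^ d - b ^ d <= 1 - (1 - (a - b)) ^ d).
  { induction d; simpl; [lra|].
    assert (a ^ d <= 1) by (apply pow_le1; lra).
    assert (0 <= a ^ d) by (apply pow_le; lra).
    assert ((1 - (a - b)) ^ d <= 1) by (apply pow_le1; lra).
    set (u := (1 - (a - b)) ^ d) in *.
    assert (b * (a ^ d - b ^ d) <= b * (1 - u)) by (apply Rmult_le_compat_l; lra).
    assert (b * (1 - u) <= (1 - (a - b)) * (1 - u)) by (apply Rmult_le_compat_r; lra).
    nra. }
  assert ((1 - c) ^ d <= (1 - (a - b)) ^ d) by (apply pow_incr; lra). lra.
Qed.

Lemma min_le_dyadic_sum Y M N : 0 <= Y -> 0 < M ->
  Rmin Y (2 ^ N * M) <= M + lsum (fun u => 2 ^ u * M * indic_lt (2 ^ u * M) Y) (seq 0 N).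
Proof.
  intros HY HM. induction N; [simpl; unfold Rmin; destruct Rle_dec; lra|].
  rewrite seq_S, lsum_app. simpl. unfold indic_lt at 2.
  assert (0 < 2 ^ N) by (apply pow_lt; lra).
  destruct Rlt_dec.
  - assert (Rmin Y (2 * 2 ^ N * M) <= 2 * 2 ^ N * M) by apply Rmin_r.
    assert (Rmin Y (2 ^ N * M) = 2 ^ N * M) by (unfold Rmin; destruct Rle_dec; lra). lra.
  - assert (Rmin Y (2 * 2 ^ N * M) = Rmin Y (2 ^ N * M)) by (unfold Rmin; do 2 destruct Rle_dec; nra).
    lra.
Qed.

(* With [F (2 v) >= 3/4 F v] the terms [2^u M F (2^u M)] grow geometrically (ratio >= 3/2),
   so their sum is dominated by twice the next one. *)
Lemma dyadic_sum_le F M N : 0 < M -> (forall v, M <= v -> 3/4 * F v <= F (2 * v)) ->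
  (forall v, 0 <= v -> 0 <= F v) ->
  lsum (fun u => 2 ^ u * M * F (2 ^ u * M)) (seq 0 N) <= 2 * (2 ^ N * M) * F (2 ^ N * M).
Proof.
  intros HM H3 H0. induction N.
  - simpl. assert (0 <= F (1 * M)) by (apply H0; lra). nra.
  - rewrite seq_S, lsum_app. simpl.
    assert (1 <= 2 ^ N) by (apply pow_R1_Rle; lra).
    assert (3/4 * F (2 ^ N * M) <= F (2 * 2 ^ N * M)) by (rewrite Rmult_assoc; apply H3; nra).
    assert (0 <= F (2 ^ N * M)) by (apply H0; nra).
    assert (2 ^ N * M * F (2 ^ N * M) <= 2 ^ N * M * (4/3 * F (2 * 2 ^ N * M)))
      by (apply Rmult_le_compat_l; nra).
    lra.
Qed.

Section MassBounds.
Variables (p : nat -> R) (F : R -> R).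
Hypothesis Hp : forall k, 0 < p k <= 1.
Hypothesis Hsum : infinite_sum p 1.
Hypothesis HF : forall x, 0 <= x -> infinite_sum (low p x) (F x).

Let Hp0 k : 0 <= p k := Rlt_le _ _ (proj1 (Hp k)).

Lemma low_mass_le1 x : 0 <= x -> F x <= 1.
Proof. intros Hx. apply (infinite_sum_le p (low p x)); auto. intros n; apply low_le, Hp0. Qed.

Lemma low_mass_nonneg x : 0 <= x -> 0 <= F x.
Proof.
  intros Hx. apply (infinite_sum_le (low p x) (fun _ => 0)); auto using infinite_sum_zero.
  intros n; apply low_le, Hp0.
Qed.

Lemma low_mass_anti x y : 0 <= x <= y -> F y <= F x.
Proof. intros H. apply (infinite_sum_le (low p x) (low p y)); try apply HF; try lra. intros n; apply low_anti; auto; lra. Qed.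

(* A product below [exp (- x)] either has a factor below [exp (- x)], or a factor in
   [[exp (- x), exp (- z))], or all factors at least [exp (- z)], and then its [- ln] exceeds [x]. *)
Lemma small_product_le l x z : 0 < x -> 0 <= z <= x ->
  lprod p l * indic_lt (lprod p l) (exp (- x))
  <= (lprod p l - lprod (fun k => p k - low p x k) l)
     + lprod p l * lsum (fun k => indic_lt (p k) (exp (- z)) - indic_lt (p k) (exp (- x))) l
     + lprod p l * lsum (fun k => nlog_cut z (p k) / x) l.
Proof.
  intros Hx Hz. set (P := lprod p l). set (Q := lprod (fun k => p k - low p x k) l).
  assert (HP : 0 < P) by (apply lprod_pos; apply Hp).
  assert (Hexz : exp (- x) <= exp (- z)) by (apply exp_le; lra).
  assert (S2 : 0 <= lsum (fun k => indic_lt (p k) (exp (- z)) - indic_lt (p k) (exp (- x))) l)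
    by (apply lsum_nonneg; intros; apply indic_lt_mono; auto).
  assert (S3 : 0 <= lsum (fun k => nlog_cut z (p k) / x) l).
  { apply lsum_nonneg; intros. apply Rmult_le_pos; [apply nlog_cut_nonneg, Hp | left; now apply Rinv_0_lt_compat]. }
  assert (HQ : 0 <= Q <= P).
  { split; [apply lprod_nonneg | apply lprod_le]; intros k; pose proof (low_le p x k (Hp0 k)); lra. }
  pose proof (indic_lt_01 P (exp (- x))).
  destruct (classic (exists k, In k l /\ p k < exp (- x))) as [[k [Hk Hk2]] | Hall].
  { assert (Q = 0) by (apply (lprod_zero _ _ k Hk); unfold low; destruct Rlt_dec; lra). nra. }
  assert (Q = P).
  { apply lprod_ext. intros k Hk. unfold low; destruct Rlt_dec; [|lra]. exfalso; eauto. }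
  destruct (classic (exists k, In k l /\ p k < exp (- z))) as [[k [Hk Hk2]] | Hall2].
  { assert (1 <= lsum (fun k => indic_lt (p k) (exp (- z)) - indic_lt (p k) (exp (- x))) l).
    { eapply Rle_trans; [|apply (lsum_ge_term _ _ k); auto using indic_lt_mono].
      unfold indic_lt. destruct Rlt_dec; [|lra]. destruct Rlt_dec; [exfalso; eauto | lra]. }
    nra. }
  assert (E : lsum (fun k => nlog_cut z (p k) / x) l = - ln P / x).
  { unfold P. rewrite ln_lprod by apply Hp.
    rewrite (lsum_ext _ (fun k => -1 * ln (p k) * / x)).
    - rewrite lsum_scal_r, lsum_scal. unfold Rdiv; ring.
    - intros k Hk. unfold nlog_cut. destruct Rlt_dec; [exfalso; eauto | unfold Rdiv; ring]. }
  rewrite E. unfold indic_lt at 1. destruct Rlt_dec as [Hlt | _]; [|nra].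
  assert (ln P < - x) by (rewrite <- (ln_exp (- x)); now apply ln_increasing).
  assert (1 <= - ln P / x).
  { unfold Rdiv. apply (Rmult_le_reg_r x); auto. rewrite Rmult_assoc, Rinv_l; lra. }
  nra.
Qed.

Lemma box_small_mass_le d K x z : 0 < x -> 0 <= z <= x ->
  lsum (fun l => lprod p l * indic_lt (lprod p l) (exp (- x))) (box d K)
  <= (1 - (1 - F x) ^ d) + INR d * (F z - F x)
     + INR d * lsum (fun k => p k * (nlog_cut z (p k) / x)) (seq 0 (S K)).
Proof.
  intros Hx Hz.
  eapply Rle_trans; [apply lsum_le; intros l _; apply (small_product_le l x z); auto|].
  rewrite !lsum_plus, lsum_minus, !lsum_lprod_box.
  assert (HS : lsum p (seq 0 (S K)) <= 1) by (apply partial_sum_le; auto).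
  assert (HSx : lsum (low p x) (seq 0 (S K)) <= F x) by (apply partial_sum_le; [intros; apply low_le, Hp0 | apply HF; lra]).
  assert (0 <= lsum (low p x) (seq 0 (S K))) by (apply lsum_nonneg; intros; apply low_le, Hp0).
  assert (Hexz : exp (- x) <= exp (- z)) by (apply exp_le; lra).
  pose proof (lsum_box_additive_le p _ d K Hp0 (fun k => indic_lt_mono (p k) _ _ Hexz) HS) as B2.
  assert (Hnl : forall k, 0 <= nlog_cut z (p k) / x).
  { intros k. apply Rmult_le_pos; [apply nlog_cut_nonneg, Hp | left; now apply Rinv_0_lt_compat]. }
  pose proof (lsum_box_additive_le p _ d K Hp0 Hnl HS) as B3.
  assert (M2 : lsum (fun k => p k * (indic_lt (p k) (exp (- z)) - indic_lt (p k) (exp (- x)))) (seq 0 (S K))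
               <= F z - F x).
  { rewrite (lsum_ext _ (fun k => low p z k - low p x k)).
    - rewrite lsum_minus. apply partial_sum_diff_le; try apply HF; try lra.
      intros n; apply low_anti; auto; lra.
    - intros k _. unfold low, indic_lt. do 2 destruct Rlt_dec; lra. }
  assert (M1 : lsum p (seq 0 (S K)) ^ d - lsum (fun k => p k - low p x k) (seq 0 (S K)) ^ d
               <= 1 - (1 - F x) ^ d).
  { apply pow_sub_pow_le; [| rewrite lsum_minus; lra | lra | rewrite lsum_minus; lra | apply low_mass_le1; lra].
    apply lsum_nonneg; intros k _; pose proof (low_le p x k (Hp0 k)); lra. }
  pose proof (pos_INR d).
  assert (INR d * lsum (fun k => p k * (indic_lt (p k) (exp (- z)) - indic_lt (p k) (exp (- x))))
            (seq 0 (S K)) <= INR d * (F z - F x)) by (apply Rmult_le_compat_l; auto).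
  lra.
Qed.

Lemma box_large_mass_le d K y : 0 <= y ->
  lsum (fun l => lprod p l * (1 - indic_lt (lprod p l) (exp (- y)))) (box d K) <= (1 - F y) ^ d.
Proof.
  intros Hy.
  apply Rle_trans with (lsum (lprod (fun k => p k - low p y k)) (box d K)).
  - apply lsum_le. intros l _. unfold indic_lt. destruct Rlt_dec as [_ | Hge].
    + rewrite Rminus_diag, Rmult_0_r. apply lprod_nonneg. intros k. pose proof (low_le p y k (Hp0 k)); lra.
    + rewrite Rminus_0_r, Rmult_1_r. right. apply lprod_ext. intros k Hk. unfold low.
      destruct Rlt_dec; [|lra]. pose proof (lprod_le_factor p l k Hp Hk). lra.
  - rewrite lsum_lprod_box. apply pow_incr. split.
    + apply lsum_nonneg. intros k _. pose proof (low_le p y k (Hp0 k)); lra.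
    + rewrite lsum_minus. apply partial_sum_diff_le; auto. intros n; apply low_le, Hp0.
Qed.

Lemma sum_nlog_cut_le M N K : 0 < M -> (forall v, M <= v -> 3/4 * F v <= F (2 * v)) ->
  lsum (fun k => p k * nlog_cut (2 ^ N * M) (p k)) (seq 0 (S K)) <= M + 2 * (2 ^ N * M) * F (2 ^ N * M).
Proof.
  intros HM H3. set (Z := 2 ^ N * M). assert (HZ : 0 < Z) by (apply Rmult_lt_0_compat; auto; apply pow_lt; lra).
  assert (Hterm : forall k, p k * nlog_cut Z (p k)
                  <= p k * M + lsum (fun u => 2 ^ u * M * low p (2 ^ u * M) k) (seq 0 N)).
  { intros k. pose proof (ln_nonpos _ (Hp k)).
    assert (nlog_cut Z (p k) <= Rmin (- ln (p k)) Z).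
    { unfold nlog_cut. destruct Rlt_dec; [apply Rmin_glb; lra|].
      assert (- ln (p k) <= Z).
      { assert (ln (exp (- Z)) <= ln (p k)) by (apply ln_le; [apply exp_pos | lra]).
        rewrite ln_exp in *. lra. }
      unfold Rmin; destruct Rle_dec; lra. }
    pose proof (min_le_dyadic_sum (- ln (p k)) M N ltac:(lra) HM) as Hmin. fold Z in Hmin.
    apply Rle_trans with (p k * (M + lsum (fun u => 2 ^ u * M * indic_lt (2 ^ u * M) (- ln (p k))) (seq 0 N))).
    { apply Rmult_le_compat_l; [apply Hp0 | lra]. }
    rewrite Rmult_plus_distr_l, <- lsum_scal. apply Rplus_le_compat_l. right. apply lsum_ext. intros u _.
    unfold low, indic_lt. destruct Rlt_dec as [h1 | h1]; destruct Rlt_dec as [h2 | h2]; try ring; exfalso.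
    - apply h2. rewrite <- (exp_ln (p k)) by apply Hp. apply exp_increasing; lra.
    - apply h1. assert (ln (p k) < ln (exp (- (2 ^ u * M)))) by (apply ln_increasing; [apply Hp | auto]).
      rewrite ln_exp in *; lra. }
  eapply Rle_trans; [apply lsum_le; intros k _; apply Hterm|].
  rewrite lsum_plus, lsum_scal_r, lsum_swap.
  assert (lsum p (seq 0 (S K)) <= 1) by (apply partial_sum_le; auto).
  assert (lsum (fun u => lsum (fun k => 2 ^ u * M * low p (2 ^ u * M) k) (seq 0 (S K))) (seq 0 N)
          <= lsum (fun u => 2 ^ u * M * F (2 ^ u * M)) (seq 0 N)).
  { apply lsum_le. intros u _. rewrite lsum_scal. assert (0 < 2 ^ u) by (apply pow_lt; lra).
    apply Rmult_le_compat_l; [nra|]. apply partial_sum_le; [intros; apply low_le, Hp0 | apply HF; nra]. }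
  pose proof (dyadic_sum_le F M N HM H3 low_mass_nonneg) as Hdy. fold Z in Hdy. nra.
Qed.
End MassBounds.

(** * Nonincreasing enumeration of the products *)

Lemma sig_eq {A} {P : A -> Prop} (u v : {a : A | P a}) : proj1_sig u = proj1_sig v -> u = v.
Proof. apply eq_sig_hprop. intros; apply proof_irrelevance. Qed.

Lemma exists_least (P : nat -> Prop) :
  (exists n, P n) -> exists n, P n /\ forall m, (m < n)%nat -> ~ P m.
Proof.
  intros H.
  destruct (Wf_nat.dec_inh_nat_subset_has_unique_least_element P (fun n => classic (P n)) H)
    as [n [[Hn Hmin] _]].
  exists n. split; auto. intros m Hm Pm. specialize (Hmin m Pm). lia.
Qed.

Lemma exists_max {A} (h : A -> R) (L : list A) :
  L <> nil -> exists a, In a L /\ forall b, In b L -> h b <= h a.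
Proof.
  induction L as [|x L IH]; intros H; [contradiction|].
  destruct L as [|y L']; [exists x; split; [left | intros b [<- | []]]; auto; lra|].
  destruct IH as [a [Ha Hb]]; [discriminate|].
  destruct (Rle_dec (h x) (h a)).
  - exists a. split; [right; auto|]. intros b [<- | Hb']; auto.
  - exists x. split; [left; auto|]. intros b [<- | Hb']; [lra|]. specialize (Hb b Hb'). lra.
Qed.

(* The nonincreasing enumeration is built greedily: [enum n] is a largest product among the
   multi-indices not enumerated before; superlevel sets are finite, so every multi-index is reached. *)
Section Rearrangement.
Variables (p : nat -> R) (d : nat).
Hypothesis Hp : forall k, 0 < p k <= 1.
Hypothesis Hsup : forall t, 0 < t -> exists K, forall k, t <= p k -> (k <= K)%nat.
Hypothesis Hd : (1 <= d)%nat.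

Let f (i : multi_index d) : R := lprod p (proj1_sig i).

Lemma multi_index_not_listed (L : list (multi_index d)) : exists b, ~ In b L.
Proof.
  apply NNPP. intros H.
  assert (Hall : forall b, In b L) by (intros b; apply NNPP; intros Hb; apply H; eauto).
  assert (Hlen : forall n, length (n :: repeat 0%nat (pred d)) = d)
    by (intros n; simpl; rewrite repeat_length; lia).
  set (c n := exist _ (n :: repeat 0%nat (pred d)) (Hlen n) : multi_index d).
  assert (ND : NoDup (map c (seq 0 (S (length L))))).
  { apply NoDup_map_NoDup_ForallPairs; [|apply seq_NoDup].
    intros a b _ _ E. apply (f_equal (@proj1_sig _ _)) in E. now inversion E. }
  pose proof (NoDup_incl_length ND (fun b _ => Hall b)). rewrite length_map, length_seq in *. lia.
Qed.

Lemma superlevel_in_box t : 0 < t ->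
  exists K, forall i : multi_index d, t <= f i -> In (proj1_sig i) (box d K).
Proof.
  intros Ht. destruct (Hsup t Ht) as [K HK]. exists K. intros i Hi. apply box_In.
  split; [apply (proj2_sig i)|]. apply Forall_forall. intros k Hk. apply HK.
  pose proof (lprod_le_factor p _ k Hp Hk). unfold f in Hi. lra.
Qed.

Lemma exists_max_not_listed (L : list (multi_index d)) :
  exists a, ~ In a L /\ forall j, ~ In j L -> f j <= f a.
Proof.
  destruct (multi_index_not_listed L) as [b Hb].
  destruct (superlevel_in_box (f b) (lprod_pos p _ (fun k => proj1 (Hp k)))) as [K HK].
  set (listed l := if in_dec (list_eq_dec Nat.eq_dec) l (map (@proj1_sig _ _) L) then false else true).
  assert (Hlisted : forall j, listed (proj1_sig j) = true <-> ~ In j L).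
  { intros j. unfold listed. destruct in_dec as [Hin | Hin]; split; try easy.
    - intros HjL. exfalso. apply in_map_iff in Hin as [j' [E Hj']]. apply sig_eq in E. subst; auto.
    - intros _ HjL. apply Hin, in_map, HjL. }
  set (cand := filter listed (box d K)).
  assert (Hbc : In (proj1_sig b) cand) by (apply filter_In; split; [apply HK; lra | now apply Hlisted]).
  destruct (exists_max (lprod p) cand) as [l [Hl Hmax]]; [intros E; rewrite E in Hbc; contradiction|].
  apply filter_In in Hl as [Hl1 Hl2]. apply box_In in Hl1 as [Hlen _].
  exists (exist _ l Hlen). split; [now apply (Hlisted (exist _ l Hlen))|].
  intros j Hj. destruct (Rle_dec (f b) (f j)).
  - apply Hmax, filter_In. split; [apply HK; auto | now apply Hlisted].
  - assert (f b <= lprod p l) by (apply Hmax; auto). unfold f at 2; simpl. lra.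
Qed.

Definition next_largest (L : list (multi_index d)) : multi_index d :=
  proj1_sig (constructive_indefinite_description _ (exists_max_not_listed L)).

Lemma next_largest_spec L :
  ~ In (next_largest L) L /\ forall j, ~ In j L -> f j <= f (next_largest L).
Proof. unfold next_largest. destruct constructive_indefinite_description; auto. Qed.

Fixpoint enum_prefix (n : nat) : list (multi_index d) :=
  match n with O => nil | S n => enum_prefix n ++ next_largest (enum_prefix n) :: nil end.

Definition enum (n : nat) : multi_index d := next_largest (enum_prefix n).

Lemma in_enum_prefix n x : In x (enum_prefix n) <-> exists m, (m < n)%nat /\ x = enum m.
Proof.
  induction n; simpl; [split; [intros [] | intros [m [Hm _]]; lia]|].
  rewrite in_app_iff, IHn. simpl. split.
  - intros [[m [Hm ->]] | [<- | []]]; [exists m | exists n]; split; auto; lia.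
  - intros [m [Hm ->]]. destruct (Nat.eq_dec m n); [subst; right; left; auto | left; exists m; split; auto; lia].
Qed.

Lemma enum_inj m n : enum m = enum n -> m = n.
Proof.
  intros E. destruct (Nat.lt_trichotomy m n) as [H | [H | H]]; auto; exfalso.
  - apply (proj1 (next_largest_spec (enum_prefix n))). apply in_enum_prefix. exists m; auto.
  - apply (proj1 (next_largest_spec (enum_prefix m))). apply in_enum_prefix. exists n; auto.
Qed.

Lemma enum_nonincreasing n : f (enum (S n)) <= f (enum n).
Proof.
  apply (proj2 (next_largest_spec (enum_prefix n))). intros Hin.
  apply (proj1 (next_largest_spec (enum_prefix (S n)))). simpl. apply in_or_app; auto.
Qed.

Lemma enum_surj i : exists n, enum n = i.
Proof.
  apply NNPP; intros H.
  assert (Hge : forall n, f i <= f (enum n)).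
  { intros n. apply (proj2 (next_largest_spec (enum_prefix n))). intros Hin.
    apply in_enum_prefix in Hin as [m [_ ->]]. eauto. }
  destruct (superlevel_in_box (f i) (lprod_pos p _ (fun k => proj1 (Hp k)))) as [K HK].
  set (N := S (length (box d K))).
  assert (ND : NoDup (map (fun n => proj1_sig (enum n)) (seq 0 N))).
  { apply NoDup_map_NoDup_ForallPairs; [|apply seq_NoDup].
    intros a b _ _ E. apply enum_inj, sig_eq, E. }
  assert (Inc : incl (map (fun n => proj1_sig (enum n)) (seq 0 N)) (box d K)).
  { intros l Hl. apply in_map_iff in Hl as [n [<- _]]. apply HK, Hge. }
  pose proof (NoDup_incl_length ND Inc). rewrite length_map, length_seq in *. unfold N in *. lia.
Qed.

Lemma rearrangement_exists : exists mu, is_rearrangement mu f.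
Proof.
  set (r i := proj1_sig (constructive_indefinite_description _ (enum_surj i))).
  assert (Hr : forall i, enum (r i) = i)
    by (intros i; unfold r; destruct constructive_indefinite_description; auto).
  exists (fun n => f (enum n)). split; [|split].
  - intros k. left. apply lprod_pos, Hp.
  - intros k. apply enum_nonincreasing.
  - assert (Hrpos : forall y : {i | 0 < f i}, 0 < f (enum (r (proj1_sig y))))
      by (intros y; rewrite Hr; apply (proj2_sig y)).
    exists (fun x : {k | 0 < f (enum k)} => exist (fun i => 0 < f i) (enum (proj1_sig x)) (proj2_sig x)),
      (fun y => exist (fun k => 0 < f (enum k)) (r (proj1_sig y)) (Hrpos y)).
    split; [|split]; [intros x | intros y | reflexivity]; apply sig_eq; simpl;
      [apply enum_inj|]; apply Hr.
Qed.
End Rearrangement.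

(** * Rearranged products and [nX] *)

Lemma le_list_max l k : In k l -> (k <= list_max l)%nat.
Proof. intros Hk. exact (proj1 (Forall_forall _ l) (proj1 (list_max_le l _) (le_n _)) k Hk). Qed.

Section RearrangedProducts.
Variables (p : nat -> R) (d : nat) (mu : nat -> R).
Hypothesis Hp : forall k, 0 < p k <= 1.
Hypothesis Hmu : is_rearrangement mu (fun i : multi_index d => lprod p (proj1_sig i)).

Lemma rearrangement_anti m n : (m <= n)%nat -> mu n <= mu m.
Proof. induction 1; [lra|]. pose proof (proj1 (proj2 Hmu) m0). lra. Qed.

(* Distinct indices with [mu k > 0] come from distinct multi-indices, which all lie in a large box. *)
Lemma lsum_rearrangement_le_box (w : R -> R) (Lk : list nat) : (forall x, 0 <= w x) -> NoDup Lk ->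
  exists K, lsum (fun k => mu k * w (mu k)) Lk <= lsum (fun l => lprod p l * w (lprod p l)) (box d K).
Proof.
  intros Hw HN. destruct Hmu as [Hnn [_ [g [h [Hhg [_ Hval]]]]]].
  set (pos k := if Rlt_dec 0 (mu k) then true else false).
  set (G k := match Rlt_dec 0 (mu k) with
              | left H => proj1_sig (proj1_sig (g (exist _ k H))) | right _ => nil end).
  assert (HG : forall k, 0 < mu k -> mu k = lprod p (G k) /\ length (G k) = d).
  { intros k Hk. unfold G. destruct Rlt_dec as [r|]; [|lra].
    split; [apply (Hval (exist _ k r)) | apply (proj2_sig (proj1_sig (g _)))]. }
  assert (Ginj : forall a b, 0 < mu a -> 0 < mu b -> G a = G b -> a = b).
  { intros a b Ha Hb E. unfold G in E.
    destruct (Rlt_dec 0 (mu a)) as [ra|]; [|lra]. destruct (Rlt_dec 0 (mu b)) as [rb|]; [|lra].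
    assert (E2 : g (exist _ a ra) = g (exist _ b rb)) by (apply sig_eq, sig_eq, E).
    apply (f_equal h) in E2. rewrite !Hhg in E2. apply (f_equal (@proj1_sig _ _)) in E2. auto. }
  set (Lp := filter pos Lk).
  assert (HLp : forall k, In k Lp -> 0 < mu k).
  { intros k Hk. apply filter_In in Hk as [_ Hk]. unfold pos in Hk. destruct Rlt_dec; easy. }
  exists (list_max (concat (map G Lp))).
  rewrite (lsum_filter _ pos).
  2:{ intros a _ Ha. unfold pos in Ha. destruct Rlt_dec; [discriminate|].
      assert (mu a = 0) by (pose proof (Hnn a); lra). rewrite H; ring. }
  fold Lp. rewrite (lsum_ext _ (fun k => lprod p (G k) * w (lprod p (G k)))).
  2:{ intros k Hk. now rewrite <- (proj1 (HG k (HLp k Hk))). }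
  rewrite <- (lsum_map (fun l => lprod p l * w (lprod p l)) G).
  apply lsum_incl.
  - intros l. apply Rmult_le_pos; auto. apply lprod_nonneg. intros; pose proof (Hp k); lra.
  - apply NoDup_map_NoDup_ForallPairs; [|apply NoDup_filter; auto]. intros a b Ha Hb. apply Ginj; auto.
  - intros l Hl. apply box_In. split.
    + apply in_map_iff in Hl as [k [<- Hk]]. apply HG; auto.
    + apply Forall_forall. intros k Hk. apply le_list_max, in_concat. eauto.
Qed.

Lemma lsum_box_le_rearrangement K : exists M, lsum (lprod p) (box d K) <= lsum mu (seq 0 M).
Proof.
  destruct Hmu as [Hnn [_ [g [h [_ [Hgh Hval]]]]]].
  assert (Hpos : forall l, 0 < lprod p l) by (intros; apply lprod_pos, Hp).
  set (H l := match Nat.eq_dec (length l) d with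
      | left E => proj1_sig (h (exist (fun i : multi_index d => 0 < lprod p (proj1_sig i))
                                   (exist _ l E) (Hpos l)))
      | right _ => 0%nat end).
  assert (HH : forall l, length l = d -> mu (H l) = lprod p l).
  { intros l Hl. unfold H. destruct Nat.eq_dec; [|contradiction]. rewrite Hval, Hgh. reflexivity. }
  assert (Hinj : forall l1 l2, length l1 = d -> length l2 = d -> H l1 = H l2 -> l1 = l2).
  { intros l1 l2 H1 H2 E. unfold H in E.
    destruct (Nat.eq_dec (length l1) d); [|contradiction]. destruct (Nat.eq_dec (length l2) d); [|contradiction].
    apply sig_eq in E. apply (f_equal g) in E. rewrite !Hgh in E.
    apply (f_equal (@proj1_sig _ _)) in E. apply (f_equal (@proj1_sig _ _)) in E. auto. }
  exists (S (list_max (map H (box d K)))).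
  rewrite (lsum_ext _ (fun l => mu (H l))) by (intros l Hl; apply box_In in Hl; rewrite HH; tauto).
  rewrite <- (lsum_map mu H). apply lsum_incl; auto.
  - apply NoDup_map_NoDup_ForallPairs; [|apply box_NoDup].
    intros a b Ha Hb. apply box_In in Ha, Hb. apply Hinj; tauto.
  - intros k Hk. apply in_seq. apply le_list_max in Hk. lia.
Qed.
End RearrangedProducts.

Section NX.
Variables (p : nat -> R) (d : nat) (mu : nat -> R) (eps : R).
Hypothesis Hp : forall k, 0 < p k <= 1.
Hypothesis Hmu : is_rearrangement mu (fun i : multi_index d => lprod p (proj1_sig i)).
Hypothesis Hbox_le : forall K, lsum (lprod p) (box d K) <= 1.
Hypothesis Hbox_ge : forall rho, 0 < rho -> exists K, 1 - rho <= lsum (lprod p) (box d K).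
Hypothesis Heps : 0 < eps < 1.

Lemma lsum_prefix_le1 M : lsum mu (seq 0 M) <= 1.
Proof.
  destruct (lsum_rearrangement_le_box p d mu Hp Hmu (fun _ => 1) (seq 0 M)) as [K HK];
    [intros; lra | apply seq_NoDup|].
  rewrite !(lsum_ext (fun _ => _ * 1) _ _ (fun _ _ => Rmult_1_r _)) in HK.
  specialize (Hbox_le K). lra.
Qed.

Lemma lsum_prefix_ge rho : 0 < rho -> exists M, 1 - rho <= lsum mu (seq 0 M).
Proof.
  intros Hr. destruct (Hbox_ge rho Hr) as [K HK].
  destruct (lsum_box_le_rearrangement p d mu Hp Hmu K) as [M HM]. exists M. lra.
Qed.

Lemma lsum_prefix_split a b : (a <= b)%nat ->
  lsum mu (seq 0 b) = lsum mu (seq 0 a) + lsum mu (seq a (b - a)).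
Proof. intros H. rewrite <- lsum_app, <- seq_app. f_equal. f_equal. lia. Qed.

Lemma nX_spec : is_nX mu eps (nX mu eps).
Proof.
  unfold nX. apply epsilon_spec.
  assert (He2 : 0 < eps ^ 2) by (apply pow_lt; lra).
  destruct (lsum_prefix_ge (eps ^ 2) He2) as [M HM].
  assert (Htail : tail_le mu M (eps ^ 2)).
  { intros m. rewrite sum_f_R0_lsum.
    pose proof (lsum_prefix_le1 (M + S m)). rewrite (lsum_prefix_split M) in H by lia.
    replace (M + S m - M)%nat with (S m) in H by lia. lra. }
  destruct (exists_least (fun n => tail_le mu n (eps ^ 2)) (ex_intro _ M Htail)) as [n Hn]. now exists n.
Qed.

Lemma nX_le n : tail_le mu n (eps ^ 2) -> (nX mu eps <= n)%nat.
Proof.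
  intros Hn. destruct (Nat.le_gt_cases (nX mu eps) n); auto.
  exfalso. apply (proj2 nX_spec n); auto.
Qed.

(* Fewer than [exp x] eigenvalues exceed [exp (- x)], since their total mass is at most 1. *)
Lemma nX_le_exp x : 0 < x ->
  (forall K, lsum (fun l => lprod p l * indic_lt (lprod p l) (exp (- x))) (box d K) <= eps ^ 2) ->
  INR (nX mu eps) <= exp x.
Proof.
  intros Hx Hbox. set (t := exp (- x)). assert (Ht : 0 < t) by apply exp_pos.
  assert (Hcount : forall N, (forall k, (k < N)%nat -> t <= mu k) -> INR N * t <= 1).
  { intros N HN. rewrite <- (length_seq N 0), <- lsum_const.
    eapply Rle_trans; [apply lsum_le | apply (lsum_prefix_le1 N)]. intros k Hk. apply in_seq in Hk. apply HN; lia. }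
  assert (Hex : exists k, mu k < t).
  { apply NNPP; intros H. destruct (INR_unbounded (1 / t)) as [N HN].
    assert (INR N * t <= 1) by (apply Hcount; intros k _; apply Rnot_lt_le; intros Hk; eauto).
    apply (Rmult_lt_compat_r t) in HN; auto. unfold Rdiv in HN. rewrite Rmult_1_l, Rinv_l in HN; lra. }
  destruct (exists_least _ Hex) as [N [HN Hmin]].
  assert (Hge : forall k, (k < N)%nat -> t <= mu k) by (intros k Hk; apply Rnot_lt_le, Hmin, Hk).
  assert (Htail : tail_le mu N (eps ^ 2)).
  { intros m. rewrite sum_f_R0_lsum.
    destruct (lsum_rearrangement_le_box p d mu Hp Hmu (fun v => indic_lt v t) (seq N (S m))) as [K HK];
      [intros; apply indic_lt_01 | apply seq_NoDup |].
    eapply Rle_trans; [|eapply Rle_trans; [apply HK | apply Hbox]].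
    right. apply lsum_ext. intros k Hk. apply in_seq in Hk. unfold indic_lt.
    destruct Rlt_dec; [ring|]. pose proof (rearrangement_anti p d mu Hmu N k ltac:(lia)). lra. }
  apply Rle_trans with (INR N); [apply le_INR, nX_le, Htail|].
  pose proof (Hcount N Hge). unfold t in *. rewrite exp_Ropp in *.
  assert (0 < exp x) by apply exp_pos.
  apply (Rmult_le_reg_r (/ exp x)); [now apply Rinv_0_lt_compat | rewrite Rinv_r; lra].
Qed.

Lemma nX_lower y B :
  (forall K, lsum (fun l => lprod p l * (1 - indic_lt (lprod p l) (exp (- y)))) (box d K) <= B) ->
  1 - eps ^ 2 <= B + INR (nX mu eps) * exp (- y).
Proof.
  intros HB. set (n := nX mu eps). set (t := exp (- y)).
  assert (Hpre : forall rho, 0 < rho -> 1 - rho - eps ^ 2 <= lsum mu (seq 0 n)).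
  { intros rho Hr. destruct (lsum_prefix_ge rho Hr) as [M HM].
    destruct (Nat.le_gt_cases M n).
    - rewrite (lsum_prefix_split M n) by lia.
      assert (0 <= lsum mu (seq M (n - M))) by (apply lsum_nonneg; intros; apply Hmu).
      assert (0 < eps ^ 2) by (apply pow_lt; lra). lra.
    - rewrite (lsum_prefix_split n M) in HM by lia. destruct (M - n)%nat as [|m] eqn:E; [lia|].
      pose proof (proj1 nX_spec m). fold n in H0. rewrite sum_f_R0_lsum in H0. lra. }
  assert (Hsplit : lsum mu (seq 0 n) <= INR n * t + B).
  { rewrite (lsum_ext mu (fun k => mu k * indic_lt (mu k) t + mu k * (1 - indic_lt (mu k) t))) by (intros; ring).
    rewrite lsum_plus. apply Rplus_le_compat.
    - rewrite <- (length_seq n 0) at 2. rewrite <- lsum_const. apply lsum_le. intros k _.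
      assert (0 < t) by apply exp_pos. unfold indic_lt. destruct Rlt_dec; lra.
    - destruct (lsum_rearrangement_le_box p d mu Hp Hmu (fun v => 1 - indic_lt v t) (seq 0 n)) as [K HK];
        [intros v; pose proof (indic_lt_01 v t); lra | apply seq_NoDup |].
      eapply Rle_trans; [apply HK | apply HB]. }
  apply Rnot_lt_le. intros H.
  specialize (Hpre ((1 - eps ^ 2 - (B + INR n * t)) / 2) ltac:(lra)). lra.
Qed.

Lemma nX_ge1 : (1 <= nX mu eps)%nat.
Proof.
  destruct (nX mu eps) eqn:E; [|lia]. exfalso.
  assert (0 < eps ^ 2 < 1) by (simpl; split; nra).
  destruct (lsum_prefix_ge ((1 - eps ^ 2) / 2) ltac:(lra)) as [[|M] HM]; [change (lsum mu (seq 0 0)) with 0 in HM; lra|].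
  pose proof (proj1 nX_spec M). rewrite E, sum_f_R0_lsum in H0. lra.
Qed.
End NX.

(** * Normalized eigenvalues *)

Section Eigenvalues.
Variables (lam : nat -> R) (Lam : R).
Hypothesis Hnn : forall k, 0 <= lam k.
Hypothesis Hdec : forall k, lam (S k) <= lam k.
Hypothesis Hpos : 0 < lam 0%nat.
Hypothesis Htrace : infinite_sum lam Lam.

Local Notation p := (lbar lam Lam).

Lemma trace_pos : 0 < Lam.
Proof. pose proof (partial_sum_le lam Lam Hnn Htrace 0). simpl in H. lra. Qed.

Lemma lbar_sum : infinite_sum p 1.
Proof.
  pose proof trace_pos.
  assert (H1 : Un_cv (fun n => sum_f_R0 lam n * / Lam) (Lam * / Lam)).
  { apply CV_mult; [exact Htrace|]. intros e He. exists O. intros. unfold Rdist. rewrite Rminus_diag, Rabs_R0; auto. }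
  rewrite Rinv_r in H1 by lra.
  intros e He. destruct (H1 e He) as [N HN]. exists N. intros n Hn.
  replace (sum_f_R0 p n) with (sum_f_R0 lam n * / Lam); [now apply HN|].
  rewrite Rmult_comm, scal_sum. apply sum_eq. intros; unfold lbar, Rdiv; ring.
Qed.

Lemma lbar_nonneg k : 0 <= p k.
Proof. unfold lbar, Rdiv. apply Rmult_le_pos; auto. left; apply Rinv_0_lt_compat, trace_pos. Qed.

Lemma lbar_anti j k : (j <= k)%nat -> p k <= p j.
Proof.
  induction 1; [lra|]. enough (p (S m) <= p m) by lra.
  unfold lbar, Rdiv. apply Rmult_le_compat_r; auto. left; apply Rinv_0_lt_compat, trace_pos.
Qed.

Lemma lbar_le1 k : p k <= 1.
Proof.
  pose proof (partial_sum_le _ _ lbar_nonneg lbar_sum k).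
  rewrite (seq_S k 0), lsum_app in H. simpl in H.
  assert (0 <= lsum p (seq 0 k)) by (apply lsum_nonneg; intros; apply lbar_nonneg). lra.
Qed.

Lemma lbar_superlevel_finite t : 0 < t -> exists K, forall k, t <= p k -> (k <= K)%nat.
Proof.
  intros Ht. destruct (INR_unbounded (1 / t)) as [K HK]. exists K. intros k Hk.
  destruct (Nat.le_gt_cases k K); auto. exfalso.
  pose proof (partial_sum_le _ _ lbar_nonneg lbar_sum k).
  assert (INR (S k) * t <= lsum p (seq 0 (S k))).
  { rewrite <- (length_seq (S k) 0) at 1. rewrite <- lsum_const. apply lsum_le. intros j Hj.
    apply in_seq in Hj. pose proof (lbar_anti j k ltac:(lia)). lra. }
  assert (INR K + 1 <= INR (S k)) by (rewrite <- S_INR; apply le_INR; lia).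
  apply (Rmult_lt_compat_r t) in HK; auto. unfold Rdiv in HK. rewrite Rmult_1_l, Rinv_l in HK by lra.
  nra.
Qed.

Variable phi : R -> R.
Hypothesis Hphi : forall x, 0 <= x -> infinite_sum (low p x) (phi x).

(* If some eigenvalue vanished, the eigenvalues would be eventually zero, and [phi] would
   vanish beyond [- ln] of the last positive one. *)
Lemma lbar_pos T : (forall x, T <= x -> 0 < phi x) -> forall k, 0 < p k.
Proof.
  intros HT k. apply NNPP; intros Hk.
  destruct (exists_least (fun k => ~ 0 < p k) (ex_intro _ k Hk)) as [k0 [Hk0 Hmin]].
  destruct k0 as [|k1].
  { apply Hk0. unfold lbar, Rdiv. apply Rmult_lt_0_compat; auto. apply Rinv_0_lt_compat, trace_pos. }
  assert (Hq : 0 < p k1) by (apply NNPP; intros; apply (Hmin k1); auto).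
  set (x := Rmax T (- ln (p k1))).
  pose proof (ln_nonpos (p k1) (conj Hq (lbar_le1 k1))).
  assert (Hx0 : 0 <= x) by (eapply Rle_trans; [|apply Rmax_r]; lra).
  assert (Hex : exp (- x) <= p k1).
  { rewrite <- (exp_ln (p k1)) by auto. apply exp_le. pose proof (Rmax_r T (- ln (p k1))). fold x in H0. lra. }
  assert (Z : forall n, low p x n = 0).
  { intros n. unfold low. destruct Rlt_dec; auto.
    destruct (Nat.le_gt_cases n k1) as [Hn | Hn]; [pose proof (lbar_anti n k1 Hn); lra|].
    pose proof (lbar_anti (S k1) n Hn). pose proof (lbar_nonneg (S k1)). pose proof (lbar_nonneg n).
    apply Rnot_lt_le in Hk0. lra. }
  assert (phi x = 0).
  { apply (UL_sequence (sum_f_R0 (low p x))); [now apply Hphi|].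
    rewrite (functional_extensionality _ _ (fun n => sum_eq_R0 _ n (fun k _ => Z k))).
    intros e He. exists O. intros. unfold Rdist. rewrite Rminus_0_r, Rabs_R0. lra. }
  assert (0 < phi x) by (apply HT, Rmax_l). lra.
Qed.

Lemma phi_vanishes : (forall k, 0 < p k) ->
  forall eta, 0 < eta -> exists X, forall x, X <= x -> phi x <= eta.
Proof.
  intros Hpp eta He. destruct (lbar_sum eta He) as [K HK]. specialize (HK K (le_n K)).
  unfold Rdist in HK. rewrite (sum_f_R0_lsum _ 0) in HK. apply Rabs_def2 in HK.
  exists (Rmax 0 (- ln (p K))). intros x Hx.
  assert (Hx0 : 0 <= x) by (eapply Rle_trans; [apply Rmax_l | eauto]).
  assert (Hlow : lsum (low p x) (seq 0 (S K)) = 0).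
  { rewrite (lsum_ext _ (fun _ => 0)); [rewrite lsum_const; ring|].
    intros k Hk. apply in_seq in Hk. unfold low. destruct Rlt_dec; auto. exfalso.
    pose proof (lbar_anti k K ltac:(lia)).
    assert (- ln (p K) <= x) by (eapply Rle_trans; [apply Rmax_r | eauto]).
    assert (exp (- x) <= p K) by (rewrite <- (exp_ln (p K)) by apply Hpp; apply exp_le; lra).
    lra. }
  pose proof (partial_sum_diff_le p (low p x) 1 (phi x) (fun n => proj2 (low_le p x n (lbar_nonneg n)))
                lbar_sum (Hphi x Hx0) K).
  lra.
Qed.
End Eigenvalues.

Section Dimension.
Variables (lam : nat -> R) (Lam : R) (phi : R -> R) (eps : R) (d : nat).
Hypothesis Hnn : forall k, 0 <= lam k.
Hypothesis Hdec : forall k, lam (S k) <= lam k.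
Hypothesis Hpos : 0 < lam 0%nat.
Hypothesis Htrace : infinite_sum lam Lam.
Hypothesis Hphi : forall x, 0 <= x -> infinite_sum (low (lbar lam Lam) x) (phi x).
Hypothesis Hpp : forall k, 0 < lbar lam Lam k.
Hypothesis Heps : 0 < eps < 1.
Hypothesis Hd : (1 <= d)%nat.

Local Notation p := (lbar lam Lam).
Local Notation nXd := (nX (lbarXd lam Lam d) eps).

Let Hp k : 0 < p k <= 1 := conj (Hpp k) (lbar_le1 lam Lam Hnn Hpos Htrace k).

Lemma lbarXd_rearrangement : is_rearrangement (lbarXd lam Lam d) (fun i : multi_index d => lprod p (proj1_sig i)).
Proof.
  assert (E : prod_eig lam Lam d = fun i : multi_index d => lprod p (proj1_sig i))
    by (apply functional_extensionality; intros i; apply fold_right_Rmult_map).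
  unfold lbarXd. rewrite E. apply (epsilon_spec (inhabits (fun _ : nat => 0))).
  apply rearrangement_exists; auto. apply lbar_superlevel_finite; auto.
Qed.

Lemma box_mass_le1 K : lsum (lprod p) (box d K) <= 1.
Proof.
  rewrite lsum_lprod_box. apply pow_le1. split.
  - apply lsum_nonneg; intros; apply lbar_nonneg; auto.
  - apply partial_sum_le; [apply lbar_nonneg | apply lbar_sum]; auto.
Qed.

Lemma box_mass_ge rho : 0 < rho -> exists K, 1 - rho <= lsum (lprod p) (box d K).
Proof.
  intros Hr. set (r := rho / (INR d + 1)). pose proof (pos_INR d).
  assert (Hr' : 0 < r) by (apply Rdiv_lt_0_compat; lra).
  destruct (lbar_sum lam Lam Hnn Hpos Htrace r Hr') as [K HK]. exists K. specialize (HK K (le_n K)).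
  unfold Rdist in HK. rewrite (sum_f_R0_lsum _ 0) in HK. apply Rabs_def2 in HK.
  rewrite lsum_lprod_box. set (S0 := lsum p (seq 0 (S K))) in *.
  assert (S0 <= 1) by (apply partial_sum_le; [apply lbar_nonneg | apply lbar_sum]; auto).
  assert (0 <= S0) by (apply lsum_nonneg; intros; apply lbar_nonneg; auto).
  pose proof (pow_ge_one_sub (1 - S0) d ltac:(lra)) as HB. replace (1 - (1 - S0)) with S0 in HB by ring.
  assert (INR d * (1 - S0) <= INR d * r) by (apply Rmult_le_compat_l; lra).
  assert ((INR d + 1) * r = rho) by (unfold r; field; lra).
  nra.
Qed.

Lemma nXd_le_exp x M N : 0 < x -> 0 < M -> 2 ^ N * M <= x ->
  (forall v, M <= v -> 3/4 * phi v <= phi (2 * v)) ->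
  (1 - (1 - phi x) ^ d) + INR d * (phi (2 ^ N * M) - phi x)
     + INR d * ((M + 2 * (2 ^ N * M) * phi (2 ^ N * M)) / x) <= eps ^ 2 ->
  INR nXd <= exp x.
Proof.
  intros Hx HM Hz H34 Hsum.
  assert (HZ : 0 < 2 ^ N * M) by (apply Rmult_lt_0_compat; auto; apply pow_lt; lra).
  apply (nX_le_exp p d _ eps Hp lbarXd_rearrangement box_mass_le1 box_mass_ge Heps x Hx).
  intros K. eapply Rle_trans; [apply (box_small_mass_le p phi Hp (lbar_sum lam Lam Hnn Hpos Htrace) Hphi d K x (2 ^ N * M)); lra|].
  eapply Rle_trans; [|apply Hsum]. apply Rplus_le_compat_l, Rmult_le_compat_l; [apply pos_INR|].
  rewrite (lsum_ext _ (fun k => p k * nlog_cut (2 ^ N * M) (p k) * / x)) by (intros; unfold Rdiv; ring).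
  rewrite lsum_scal_r. apply Rmult_le_compat_r; [left; now apply Rinv_0_lt_compat|].
  apply sum_nlog_cut_le; auto. apply lbar_sum; auto.
Qed.

Lemma nXd_lower y : 0 <= y -> 1 - eps ^ 2 <= (1 - phi y) ^ d + INR nXd * exp (- y).
Proof.
  intros Hy. apply (nX_lower p d _ eps Hp lbarXd_rearrangement box_mass_le1 box_mass_ge Heps).
  intros K. apply box_large_mass_le; auto. apply lbar_sum; auto.
Qed.

Lemma nXd_ge1 : (1 <= nXd)%nat.
Proof. apply (nX_ge1 p d _ eps Hp lbarXd_rearrangement box_mass_le1 box_mass_ge Heps). Qed.
End Dimension.

(** * Asymptotics along dyadic grids *)

Lemma exp_mult_INR u d : exp u ^ d = exp (INR d * u).
Proof.
  induction d; [simpl; rewrite Rmult_0_l, exp_0; auto|].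
  rewrite <- tech_pow_Rmult, IHd, <- exp_plus, S_INR. f_equal; ring.
Qed.

Lemma pow_le_exp a d : 0 <= a <= 1 -> (1 - a) ^ d <= exp (- (INR d * a)).
Proof.
  intros H. replace (- (INR d * a)) with (INR d * (- a)) by ring. rewrite <- exp_mult_INR.
  apply pow_incr. pose proof (exp_ineq1_le (- a)). lra.
Qed.

Lemma exp_le_pow a d : 0 <= a < 1 -> exp (- (INR d * a / (1 - a))) <= (1 - a) ^ d.
Proof.
  intros H. replace (- (INR d * a / (1 - a))) with (INR d * (- (a / (1 - a)))) by (field; lra).
  rewrite <- exp_mult_INR. apply pow_incr. split; [left; apply exp_pos|].
  pose proof (exp_ineq1_le (a / (1 - a))). pose proof (exp_pos (a / (1 - a))).
  assert (/ (1 - a) <= exp (a / (1 - a))) by (replace (/ (1 - a)) with (1 + a / (1 - a)) by (field; lra); lra).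
  rewrite exp_Ropp. apply Rinv_le_contravar in H2; [|apply Rinv_0_lt_compat; lra].
  rewrite Rinv_inv in H2. lra.
Qed.

Lemma pow_unbounded (b B : R) (m : nat) : 1 < b -> exists i, (m <= i)%nat /\ B <= b ^ i.
Proof.
  intros Hb. destruct (INR_unbounded (B / (b - 1))) as [i Hi]. exists (Nat.max i m). split; [lia|].
  pose proof (poly i (b - 1) ltac:(lra)). replace (1 + (b - 1)) with b in H by ring.
  apply (Rmult_lt_compat_r (b - 1)) in Hi; [|lra]. unfold Rdiv in Hi.
  rewrite Rmult_assoc, Rinv_l, Rmult_1_r in Hi by lra.
  assert (b ^ i <= b ^ Nat.max i m) by (apply Rle_pow; lia || lra). lra.
Qed.

Lemma first_crossing (P : nat -> Prop) : ~ P 0%nat -> (exists j, P j) -> exists k, ~ P k /\ P (S k).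
Proof.
  intros H0 Hex. destruct (exists_least P Hex) as [[|k] [Hk Hmin]]; [contradiction|].
  exists k. split; auto.
Qed.

Lemma slowly_varying_ratio phi : slowly_varying phi -> forall a e, 0 < a -> 0 < e ->
  exists A, forall x, A <= x -> 0 < phi x /\ (1 - e) * phi x <= phi (a * x) <= (1 + e) * phi x.
Proof.
  intros [T [HT Hsv]] a e Ha He. destruct (Hsv a Ha e He) as [M HM]. exists (Rmax T M). intros x Hx.
  assert (Hp : 0 < phi x) by (apply HT; eapply Rle_trans; [apply Rmax_l | eauto]).
  specialize (HM x ltac:(eapply Rle_trans; [apply Rmax_r | eauto])). apply Rabs_def2 in HM.
  assert (phi (a * x) / phi x * phi x = phi (a * x)) by (field; lra).
  split; [|split]; nra.
Qed.

Lemma doubling_threshold phi : slowly_varying phi ->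
  exists M, 1 <= M /\ forall v, M <= v -> 0 < phi v /\ 3/4 * phi v <= phi (2 * v).
Proof.
  intros Hsv. destruct (slowly_varying_ratio phi Hsv 2 (1/4)) as [A HA]; try lra.
  exists (Rmax 1 A). split; [apply Rmax_l|]. intros v Hv.
  destruct (HA v ltac:(eapply Rle_trans; [apply Rmax_r | eauto])). lra.
Qed.

Lemma dyadic_growth phi M : 0 < M -> (forall v, M <= v -> 3/4 * phi v <= phi (2 * v)) ->
  forall v j, M <= v -> 0 <= phi v -> (3/2) ^ j * (v * phi v) <= 2 ^ j * v * phi (2 ^ j * v).
Proof.
  intros HM H v j Hv Hpv.
  assert (G : (3/4) ^ j * phi v <= phi (2 ^ j * v)).
  { induction j; [simpl; rewrite !Rmult_1_l; lra|].
    assert (1 <= 2 ^ j) by (apply pow_R1_Rle; lra).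
    assert (3/4 * phi (2 ^ j * v) <= phi (2 * (2 ^ j * v))) by (apply H; nra).
    simpl. rewrite !Rmult_assoc. lra. }
  replace ((3/2) ^ j) with (2 ^ j * (3/4) ^ j) by (rewrite <- Rpow_mult_distr; f_equal; lra).
  assert (0 <= 2 ^ j * v) by (pose proof (pow_lt 2 j ltac:(lra)); nra). nra.
Qed.

(* The three error terms of the upper estimate for [n^{X_d}] are each at most [be]; the first
   leaves room [3 be] because [d a] stays [s/4] below [c] even after division by [1 - a]. *)
Lemma error_terms_le (d : nat) a b x z M c s be eps :
  0 < s < c -> exp (- c) = 1 - eps ^ 2 -> 3 * be = exp (- c) * (exp (s / 4) - 1) ->
  0 < x -> 0 <= z -> 0 <= M -> 0 < a <= s / (4 * c) -> INR d * a <= c - s / 2 ->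
  b <= (1 + be / c) * a -> M * c <= be * (x * a) -> 2 * z * ((1 + be / c) * c) <= be * x ->
  (1 - (1 - a) ^ d) + INR d * (b - a) + INR d * ((M + 2 * z * b) / x) <= eps ^ 2.
Proof.
  intros Hs Hc Hbe Hx Hz HM0 Ha Hda Hb HM Hzx. pose proof (pos_INR d).
  assert (Hbe0 : 0 < be) by (assert (1 < exp (s / 4)) by (rewrite <- exp_0; apply exp_increasing; lra);
                               pose proof (exp_pos (- c)); nra).
  assert (Hc4 : s / (4 * c) * c = s / 4) by (field; lra).
  assert (T1 : 1 - (1 - a) ^ d <= eps ^ 2 - 3 * be).
  { assert (a < 1) by (apply Rle_lt_trans with (s / (4 * c)); [lra|];
                       apply Rmult_lt_reg_r with (4 * c); [lra|]; unfold Rdiv; rewrite Rmult_assoc, Rinv_l; lra).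
    pose proof (exp_le_pow a d ltac:(lra)).
    assert (INR d * a / (1 - a) <= c - s / 4).
    { apply Rmult_le_reg_r with (1 - a); [lra|]. unfold Rdiv. rewrite Rmult_assoc, Rinv_l, Rmult_1_r by lra. nra. }
    assert (exp (- (c - s / 4)) <= exp (- (INR d * a / (1 - a)))) by (apply exp_le; lra).
    replace (- (c - s / 4)) with (- c + s / 4) in H3 by ring. rewrite exp_plus in H3. lra. }
  assert (Hdc : INR d * a <= c) by lra.
  assert (T2 : INR d * (b - a) <= be).
  { apply Rle_trans with (INR d * (be / c * a)); [apply Rmult_le_compat_l; lra|].
    replace (INR d * (be / c * a)) with (be / c * (INR d * a)) by ring.
    replace be with (be / c * c) at 2 by (field; lra). apply Rmult_le_compat_l; [|lra].
    left; apply Rdiv_lt_0_compat; lra. }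
  assert (T3a : INR d * M <= be * x).
  { apply Rmult_le_reg_r with a; [lra|].
    assert (M * (INR d * a) <= M * c) by (apply Rmult_le_compat_l; lra). nra. }
  assert (T3b : INR d * (2 * z * b) <= be * x).
  { assert (INR d * b <= (1 + be / c) * c).
    { assert (0 <= 1 + be / c) by (pose proof (Rdiv_lt_0_compat be c Hbe0 ltac:(lra)); lra). nra. }
    nra. }
  assert (INR d * ((M + 2 * z * b) / x) <= 2 * be).
  { unfold Rdiv. rewrite <- Rmult_assoc, Rmult_plus_distr_l.
    apply Rmult_le_reg_r with x; auto. rewrite Rmult_assoc, Rinv_l, Rmult_1_r by lra. lra. }
  lra.
Qed.

Lemma dyadic_crossing (P : R -> Prop) y0 : 0 < y0 -> ~ P y0 -> (exists X, forall x, X <= x -> P x) ->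
  exists k, ~ P (2 ^ k * y0) /\ P (2 * (2 ^ k * y0)).
Proof.
  intros Hy0 HP0 [X HX]. destruct (first_crossing (fun j => P (2 ^ j * y0))) as [k Hk].
  - simpl. now rewrite Rmult_1_l.
  - destruct (pow_unbounded 2 (X / y0) 0 ltac:(lra)) as [j [_ Hj]]. exists j. apply HX.
    apply (Rmult_le_compat_r y0) in Hj; [|lra]. unfold Rdiv in Hj. rewrite Rmult_assoc, Rinv_l in Hj; lra.
  - exists k. simpl in Hk. now rewrite Rmult_assoc in Hk.
Qed.

Lemma INR_mult_eventually_gt a b : 0 < b -> exists D, forall d, (D <= d)%nat -> a < INR d * b.
Proof.
  intros Hb. destruct (INR_unbounded (a / b)) as [D HD]. exists D. intros d Hd.
  apply le_INR in Hd. apply (Rmult_lt_compat_r b) in HD; auto.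
  unfold Rdiv in HD. rewrite Rmult_assoc, Rinv_l, Rmult_1_r in HD by lra. nra.
Qed.

Lemma dyadic_eventually_large phi M A B m : 1 <= M ->
  (forall v, M <= v -> 0 < phi v /\ 3/4 * phi v <= phi (2 * v)) ->
  exists i, (m <= i)%nat /\ A <= 2 ^ i * M /\ forall j, (i <= j)%nat -> B <= 2 ^ j * M * phi (2 ^ j * M).
Proof.
  intros HM1 HM. assert (HMphi : 0 < phi M) by (apply HM; lra).
  destruct (pow_unbounded (3/2) (Rmax (A / M) (B / (M * phi M))) m ltac:(lra)) as [i [Hmi Hi]].
  exists i. split; [exact Hmi | split].
  - assert (A / M <= 2 ^ i).
    { eapply Rle_trans; [apply Rmax_l|]. eapply Rle_trans; [apply Hi | apply pow_incr; lra]. }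
    apply (Rmult_le_compat_r M) in H; [|lra]. unfold Rdiv in H. rewrite Rmult_assoc, Rinv_l, Rmult_1_r in H by lra. lra.
  - intros j Hj. pose proof (dyadic_growth phi M ltac:(lra) (fun v Hv => proj2 (HM v Hv)) M j
                               (Rle_refl M) (Rlt_le _ _ HMphi)) as G.
    assert (B / (M * phi M) <= (3/2) ^ j).
    { eapply Rle_trans; [apply Rmax_r|]. eapply Rle_trans; [apply Hi | apply Rle_pow; lra || lia]. }
    apply (Rmult_le_compat_r (M * phi M)) in H; [|nra].
    unfold Rdiv in H. rewrite Rmult_assoc, Rinv_l, Rmult_1_r in H by nra. lra.
Qed.

Lemma ge_sub_of_lt_ratio c s t : 0 < s < c -> c - s / 2 < (1 + s / (2 * c)) * t -> c - s <= t.
Proof.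
  intros Hs Ht. assert (0 <= s * s / (2 * c)) by (apply Rmult_le_pos; [nra | left; apply Rinv_0_lt_compat; lra]).
  apply Rnot_lt_le. intros Hlt.
  assert ((1 + s / (2 * c)) * t < (1 + s / (2 * c)) * (c - s)).
  { apply Rmult_lt_compat_l; [|lra]. pose proof (Rdiv_lt_0_compat s (2 * c)). lra. }
  replace ((1 + s / (2 * c)) * (c - s)) with (c - s / 2 - s * s / (2 * c)) in * by (field; lra).
  lra.
Qed.

Section Asymptotics.
Variables (phi : R -> R) (n : nat -> nat) (eps : R).
Hypothesis Heps : 0 < eps < 1.
Hypothesis Hphi_nonneg : forall x, 0 <= x -> 0 <= phi x.
Hypothesis Hphi_le1 : forall x, 0 <= x -> phi x <= 1.
Hypothesis Hphi_anti : forall x y, 0 <= x <= y -> phi y <= phi x.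
Hypothesis Hphi_vanishes : forall eta, 0 < eta -> exists X, forall x, X <= x -> phi x <= eta.
Hypothesis Hsv : slowly_varying phi.
Hypothesis Hn_ge1 : forall d, (1 <= d)%nat -> (1 <= n d)%nat.
Hypothesis Hn_le_exp : forall d x M N, (1 <= d)%nat -> 0 < x -> 0 < M -> 2 ^ N * M <= x ->
  (forall v, M <= v -> 3/4 * phi v <= phi (2 * v)) ->
  (1 - (1 - phi x) ^ d) + INR d * (phi (2 ^ N * M) - phi x)
     + INR d * ((M + 2 * (2 ^ N * M) * phi (2 ^ N * M)) / x) <= eps ^ 2 ->
  INR (n d) <= exp x.
Hypothesis Hn_lower : forall d y, (1 <= d)%nat -> 0 <= y ->
  1 - eps ^ 2 <= (1 - phi y) ^ d + INR (n d) * exp (- y).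

Let c := - ln (1 - eps ^ 2).

Lemma exp_neg_c : exp (- c) = 1 - eps ^ 2.
Proof. unfold c. rewrite Ropp_involutive, exp_ln; [reflexivity|]. simpl; nra. Qed.

Lemma c_pos : 0 < c.
Proof.
  assert (0 < 1 - eps ^ 2 < 1) by (simpl; split; nra).
  unfold c. assert (ln (1 - eps ^ 2) < 0) by (rewrite <- ln_1; apply ln_increasing; lra). lra.
Qed.

Lemma dphi_eventually_lt d a : 0 < a -> exists X, forall x, X <= x -> INR d * phi x < a.
Proof.
  intros Ha. pose proof (pos_INR d).
  destruct (Hphi_vanishes (a / (INR d + 1))) as [X HX]; [apply Rdiv_lt_0_compat; lra|].
  exists (Rmax 0 X). intros x Hx.
  assert (phi x <= a / (INR d + 1)) by (apply HX; eapply Rle_trans; [apply Rmax_r | eauto]).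
  assert (0 <= phi x) by (apply Hphi_nonneg; eapply Rle_trans; [apply Rmax_l | eauto]).
  assert ((INR d + 1) * (a / (INR d + 1)) = a) by (field; lra). nra.
Qed.

Lemma ln_n_ge d y a : (1 <= d)%nat -> 0 <= y -> a <= INR d * phi y -> exp (- a) < 1 - eps ^ 2 ->
  y + ln (1 - eps ^ 2 - exp (- a)) <= ln (INR (n d)).
Proof.
  intros Hd Hy Ha Hea. pose proof (Hn_lower d y Hd Hy).
  pose proof (pow_le_exp (phi y) d (conj (Hphi_nonneg y Hy) (Hphi_le1 y Hy))).
  assert (exp (- (INR d * phi y)) <= exp (- a)) by (apply exp_le; lra).
  assert (Hn : 1 - eps ^ 2 - exp (- a) <= INR (n d) * exp (- y)) by lra.
  apply ln_le in Hn; [|lra]. rewrite ln_mult, ln_exp in Hn; [lra| |apply exp_pos].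
  apply (Rmult_lt_reg_r (exp (- y))); [apply exp_pos | lra].
Qed.

Lemma dphi_le_dphi_ln_n d x : (1 <= d)%nat -> INR (n d) <= exp x ->
  INR d * phi x <= INR d * phi (ln (INR (n d))).
Proof.
  intros Hd Hnx. pose proof (le_INR _ _ (Hn_ge1 d Hd)) as Hn1. change (INR 1) with 1 in Hn1.
  assert (0 <= ln (INR (n d)) <= x).
  { split; [rewrite <- ln_1 | rewrite <- (ln_exp x)]; apply ln_le; lra. }
  apply Rmult_le_compat_l; [apply pos_INR | apply Hphi_anti; lra].
Qed.

(* Take the last point [y] of a dyadic grid where [d phi y >= c + s/2]; by the lower bound on
   [n^{X_d}], [ln n^{X_d} >= y/2], and slow variation compares [phi (y/2)] with [phi (2 y)]. *)
Lemma dphi_ln_n_le s : 0 < s ->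
  exists D, forall d, (D <= d)%nat -> INR d * phi (ln (INR (n d))) <= c + s.
Proof.
  intros Hs. pose proof c_pos. set (c1 := c + s / 2). set (th := s / (8 * c1)).
  assert (Hth : 0 < th /\ th * c1 = s / 8) by (split; [apply Rdiv_lt_0_compat | unfold th; field]; unfold c1; lra).
  assert (Hth4 : th <= 1/4) by (apply (Rmult_le_reg_r c1); unfold c1 in *; lra).
  set (ga := 1 - eps ^ 2 - exp (- c1)).
  assert (Hga : exp (- c1) < 1 - eps ^ 2) by (rewrite <- exp_neg_c; apply exp_increasing; unfold c1; lra).
  destruct (slowly_varying_ratio phi Hsv (1/2) th) as [A1 HA1]; try lra.
  destruct (slowly_varying_ratio phi Hsv 2 (th / (1 + th))) as [A2 HA2]; [lra | apply Rdiv_lt_0_compat; lra|].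
  set (y0 := Rmax (Rmax A1 A2) (Rmax 1 (- 2 * ln ga))).
  assert (HA1y : A1 <= y0) by (eapply Rle_trans; [apply Rmax_l | apply Rmax_l]).
  assert (HA2y : A2 <= y0) by (eapply Rle_trans; [apply Rmax_r | apply Rmax_l]).
  assert (H1y : 1 <= y0) by (eapply Rle_trans; [apply Rmax_l | apply Rmax_r]).
  assert (Hgay : - 2 * ln ga <= y0) by (eapply Rle_trans; [apply Rmax_r | apply Rmax_r]).
  destruct (INR_mult_eventually_gt c1 (phi y0) (proj1 (HA1 y0 HA1y))) as [D HD].
  exists (Nat.max D 1). intros d Hd.
  destruct (dyadic_crossing (fun y => INR d * phi y < c1) y0) as [k [Hk HSk]];
    [lra | specialize (HD d ltac:(lia)); lra | apply dphi_eventually_lt; unfold c1; lra|].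
  set (y := 2 ^ k * y0) in *. apply Rnot_lt_le in Hk.
  assert (Hyy0 : y0 <= y) by (pose proof (pow_R1_Rle 2 k ltac:(lra)); unfold y; nra).
  pose proof (ln_n_ge d y c1 ltac:(lia) ltac:(lra) Hk Hga) as Hln. fold ga in Hln.
  destruct (HA1 y ltac:(lra)) as [Hpy [_ H1]]. destruct (HA2 y ltac:(lra)) as [_ [H2 _]].
  assert (phi (ln (INR (n d))) <= phi (1/2 * y)) by (apply Hphi_anti; lra).
  replace (1 - th / (1 + th)) with (/ (1 + th)) in H2 by (field; lra).
  apply (Rmult_le_compat_l (1 + th)) in H2; [|lra]. rewrite <- Rmult_assoc, Rinv_r, Rmult_1_l in H2 by lra.
  assert (phi (ln (INR (n d))) <= (1 + th) * (1 + th) * phi (2 * y)) by nra.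
  apply Rle_trans with ((1 + th) * (1 + th) * (INR d * phi (2 * y))); [pose proof (pos_INR d); nra|].
  apply Rle_trans with ((1 + th) * (1 + th) * c1); [apply Rmult_le_compat_l; nra|].
  unfold c1 in *. nra.
Qed.

Lemma n_le_exp_dyadic d x M m N s be : (1 <= d)%nat -> 0 < s < c -> 0 < be ->
  3 * be = exp (- c) * (exp (s / 4) - 1) -> 0 < M <= x ->
  (forall v, M <= v -> 0 < phi v /\ 3/4 * phi v <= phi (2 * v)) ->
  2 ^ N * M = / 2 ^ m * x -> 2 * (1 + be / c) * c / be <= 2 ^ m ->
  phi x <= s / (4 * c) -> INR d * phi x <= c - s / 2 -> phi (2 ^ N * M) <= (1 + be / c) * phi x ->
  M * c <= be * (x * phi x) ->
  INR (n d) <= exp x.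
Proof.
  intros Hd Hs Hbe Hbe3 HM HMd Hz Hm Hx4 Hdx H5 Hxphi. assert (H2m : 0 < 2 ^ m) by (apply pow_lt; lra).
  apply (Hn_le_exp d x M N); [lia | lra | lra | | intros v Hv; apply (HMd v Hv) |].
  { rewrite Hz. assert (/ 2 ^ m <= 1) by (rewrite <- Rinv_1; apply Rinv_le_contravar; [lra | apply pow_R1_Rle; lra]).
    nra. }
  apply (error_terms_le d (phi x) (phi (2 ^ N * M)) x (2 ^ N * M) M c s be eps); auto using exp_neg_c; try lra.
  - rewrite Hz. apply Rmult_le_pos; [left; now apply Rinv_0_lt_compat | lra].
  - split; [apply HMd; lra | lra].
  - rewrite Hz. apply (Rmult_le_reg_r (2 ^ m)); auto.
    replace (2 * (/ 2 ^ m * x) * ((1 + be / c) * c) * 2 ^ m) with ((2 * (1 + be / c) * c) * x) by (field; lra).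
    replace (be * x * 2 ^ m) with ((be * 2 ^ m) * x) by ring.
    apply Rmult_le_compat_r; [lra|].
    apply (Rmult_le_compat_r be) in Hm; [|lra]. unfold Rdiv in Hm.
    rewrite Rmult_assoc, Rinv_l, Rmult_1_r in Hm by lra. lra.
Qed.

(* Take the first point [x] of a dyadic grid (started far out) where [d phi x <= c - s/2]; the
   upper estimate for [n^{X_d}] then applies at [x], with [z = x / 2^m] in the entropy term. *)
Lemma dphi_ln_n_ge s : 0 < s < c ->
  exists D, forall d, (D <= d)%nat -> c - s <= INR d * phi (ln (INR (n d))).
Proof.
  intros Hs. set (c2 := c - s / 2). set (be := exp (- c) * (exp (s / 4) - 1) / 3).
  assert (Hbe : 0 < be).
  { assert (1 < exp (s / 4)) by (rewrite <- exp_0; apply exp_increasing; lra).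
    pose proof (exp_pos (- c)). unfold be. apply Rdiv_lt_0_compat; nra. }
  assert (Hth2 : 0 < be / c) by (apply Rdiv_lt_0_compat; lra).
  destruct (doubling_threshold phi Hsv) as [M [HM1 HM]].
  destruct (pow_unbounded 2 (2 * (1 + be / c) * c / be) 0 ltac:(lra)) as [m [_ Hm]].
  assert (H2m : 0 < 2 ^ m) by (apply pow_lt; lra).
  destruct (slowly_varying_ratio phi Hsv (1/2) (s / (2 * c))) as [A3 HA3]; [lra | apply Rdiv_lt_0_compat; lra|].
  destruct (slowly_varying_ratio phi Hsv (/ 2 ^ m) (be / c)) as [A5 HA5]; [now apply Rinv_0_lt_compat | auto|].
  destruct (Hphi_vanishes (s / (4 * c))) as [A4 HA4]; [apply Rdiv_lt_0_compat; lra|].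
  destruct (dyadic_eventually_large phi M (Rmax (Rmax A3 A4) A5) (M * c / be) m HM1 HM)
    as [i [Hmi [HA Hlarge]]].
  set (M1 := 2 ^ i * M) in *.
  assert (HMM1 : M <= M1) by (pose proof (pow_R1_Rle 2 i ltac:(lra)); unfold M1; nra).
  destruct (INR_mult_eventually_gt c2 (phi M1) (proj1 (HM M1 HMM1))) as [D HD].
  exists (Nat.max D 1). intros d Hd.
  destruct (dyadic_crossing (fun y => INR d * phi y <= c2) M1) as [k [Hk HSk]];
    [lra | specialize (HD d ltac:(lia)); lra |
     destruct (dphi_eventually_lt d c2) as [X HX]; [unfold c2; lra | exists X; intros; now apply Rlt_le, HX] |].
  apply Rnot_le_lt in Hk. set (x := 2 * (2 ^ k * M1)) in *.
  assert (Hxi : x = 2 ^ (S k + i) * M) by (unfold x, M1; rewrite pow_add; simpl; ring).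
  assert (HM1x : M1 <= x) by (pose proof (pow_R1_Rle 2 k ltac:(lra)); unfold x; nra).
  assert (HAx : A3 <= x /\ A4 <= x /\ A5 <= x).
  { pose proof (Rmax_l (Rmax A3 A4) A5). pose proof (Rmax_r (Rmax A3 A4) A5).
    pose proof (Rmax_l A3 A4). pose proof (Rmax_r A3 A4). lra. }
  set (N := (S k + i - m)%nat).
  assert (Hz : 2 ^ N * M = / 2 ^ m * x).
  { rewrite Hxi. replace (S k + i)%nat with (N + m)%nat by (unfold N; lia). rewrite pow_add. field. lra. }
  assert (Hxphi : M * c <= be * (x * phi x)).
  { pose proof (Hlarge (S k + i)%nat ltac:(lia)). rewrite <- Hxi in H.
    apply (Rmult_le_reg_r (/ be)); [now apply Rinv_0_lt_compat|].
    replace (be * (x * phi x) * / be) with (x * phi x) by (field; lra). unfold Rdiv in H. lra. }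
  pose proof (n_le_exp_dyadic d x M m N s be ltac:(lia) Hs Hbe ltac:(unfold be; field) ltac:(lra) HM Hz Hm
                (HA4 x ltac:(lra)) HSk ltac:(rewrite Hz; apply HA5; lra) Hxphi) as Hnx.
  eapply Rle_trans; [|apply (dphi_le_dphi_ln_n d x ltac:(lia) Hnx)].
  destruct (HA3 x ltac:(lra)) as [_ [_ H3]].
  replace (1 / 2 * x) with (2 ^ k * M1) in H3 by (unfold x; field).
  apply ge_sub_of_lt_ratio; [lra|]. fold c2. pose proof (pos_INR d). nra.
Qed.

Lemma dphi_ln_n_cv : Un_cv (fun d => INR d * phi (ln (INR (n d)))) c.
Proof.
  intros zeta Hz. pose proof c_pos. set (s := Rmin zeta c / 2).
  assert (Hs : 0 < s /\ s < c /\ s < zeta).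
  { pose proof (Rmin_l zeta c). pose proof (Rmin_r zeta c).
    assert (0 < Rmin zeta c) by (apply Rmin_glb_lt; lra). unfold s. lra. }
  destruct (dphi_ln_n_le s ltac:(lra)) as [D1 H1].
  destruct (dphi_ln_n_ge s ltac:(lra)) as [D2 H2].
  exists (Nat.max D1 D2). intros d Hd. specialize (H1 d ltac:(lia)). specialize (H2 d ltac:(lia)).
  unfold Rdist. apply Rabs_def1; lra.
Qed.
End Asymptotics.

Theorem theorem9 (lam : nat -> R) (Lam : R) (phi : R -> R)
  (Hnn : forall k, 0 <= lam k)
  (Hdec : forall k, lam (S k) <= lam k)
  (Hpos : 0 < lam 0%nat)
  (Htrace : infinite_sum lam Lam)
  (Hsv : slowly_varying phi)
  (Hphi : forall x, 0 <= x ->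
     infinite_sum
       (fun k => if Rlt_dec (lbar lam Lam k) (exp (- x)) then lbar lam Lam k else 0)
       (phi x)) :
  forall eps : R, 0 < eps < 1 ->
    Un_cv (fun d => INR d * phi (ln (INR (nX (lbarXd lam Lam d) eps))))
          (- ln (1 - eps ^ 2)).
Proof.
  intros eps Heps.
  change (forall x, 0 <= x -> infinite_sum (low (lbar lam Lam) x) (phi x)) in Hphi.
  assert (Hpp : forall k, 0 < lbar lam Lam k)
    by (destruct Hsv as [T [HT _]]; exact (lbar_pos lam Lam Hnn Hdec Hpos Htrace phi Hphi T HT)).
  assert (Hp : forall k, 0 < lbar lam Lam k <= 1) by (split; [apply Hpp | apply lbar_le1; auto]).
  pose proof (lbar_sum lam Lam Hnn Hpos Htrace) as Hsum.
  apply dphi_ln_n_cv; auto.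
  - exact (low_mass_nonneg _ _ Hp Hphi).
  - exact (low_mass_le1 _ _ Hp Hsum Hphi).
  - exact (low_mass_anti _ _ Hp Hphi).
  - exact (phi_vanishes lam Lam Hnn Hdec Hpos Htrace phi Hphi Hpp).
  - intros d Hd. exact (nXd_ge1 lam Lam eps d Hnn Hdec Hpos Htrace Hpp Heps Hd).
  - intros d x M N Hd. exact (nXd_le_exp lam Lam phi eps d Hnn Hdec Hpos Htrace Hphi Hpp Heps Hd x M N).
  - intros d y Hd. exact (nXd_lower lam Lam phi eps d Hnn Hdec Hpos Htrace Hphi Hpp Heps Hd y).
Qed.
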